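(* In the Haechi protocol (described in the context), consider any ordering cycle of the beacon chain. The block timestamp of any in-flight CrossLink is larger than the block timestamps of all CrossLinks that are ordered in the current ordering cycle.
   Context: Setting (Haechi). A sharded blockchain has shards $S_1,\dots,S_m$; shard $S_i$ maintains a chain $SC_i=\{SC_i^1,SC_i^2,\dots\}$ of blocks, where $SC_i^h$ is the block at height $h$. Each block carries a block timestamp, fixed by the shard's intra-shard BFT consensus, and block timestamps are strictly increasing in block height within each shard. A beacon shard $S_0$ maintains a beacon chain. Transactions calling order-sensitive contracts are called OTXs. Processing phase: when shard $S_i$ handles its block at height $h$, it collects the valid new OTXs of that block, in their in-block order, into a list $L_{tx}$ and sends to the beacon chain (with a quorum certificate) a CrossLink $CL=\langle blockTS, L_{tx}, i, h\rangle$, where $blockTS$ is the block's timestamp. Ordering phase (finalization fairness algorithm): for each shard $i$ the beacon chain keeps a sequence $shardCLs[i]$ of received CrossLinks of $S_i$ with consecutive block heights; a received CrossLink whose height is exactly one more than the height of the last element of $shardCLs[i]$ is appended, together with any buffered CrossLinks of $S_i$ that then continue the consecutive sequence; a CrossLink whose height exceeds that by more than one is buffered in a pool. $shardLastTS[i]$ is the block timestamp of the last CrossLink in $shardCLs[i]$. An ordering cycle is triggered once $shardCLs[i]$ contains at least one CrossLink for every $i$; the beacon chain then selects all CrossLinks in $shardCLs$ with $blockTS\le \min_{1\le i\le m} shardLastTS[i]$, and orders their OTXs: OTXs in a CrossLink with smaller block timestamp first, and within the same CrossLink by smaller index first. This order is agreed by one instance of the beacon shard's BFT consensus and is then used by the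 contract shards to execute the transactions. An in-flight CrossLink is a CrossLink of some shard that has not yet been received by the beacon chain (its block is still being processed or the CrossLink is still in transit). *)

From mathcomp Require Import all_boot.
Set Implicit Arguments. Unset Strict Implicit. Unset Printing Implicit Defensive.

Section Haechi.
(* m shards S_1..S_m, indexed by 'I_m; Tx = type of OTXs. *)
Variables (m : nat) (Tx : Type).

Record CrossLink := mkCL {
  cl_blockTS : nat;
  cl_txs     : seq Tx;
  cl_shard   : 'I_m;
  cl_height  : nat }.

(* The shard chains: ts i h = timestamp of block SC_i^h (heights h >= 1),
   txs i h = valid new OTXs of that block, in in-block order. *)
Variables (ts : 'I_m -> nat -> nat) (txs : 'I_m -> nat -> seq Tx).

Definition genCL (i : 'I_m) (h : nat) : CrossLink := mkCL (ts i h) (txs i h) i h.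

(* Beacon-chain state: lastH i = height of the last CrossLink ever appended to
   shardCLs[i] (0 initially), shardCLs, and the buffer pool. *)
Record BState := mkBS {
  lastH    : 'I_m -> nat;
  shardCLs : 'I_m -> seq CrossLink;
  pool     : seq CrossLink }.

Definition init_state : BState := mkBS (fun _ => 0) (fun _ => [::]) [::].

Definition append_cl (s : BState) (cl : CrossLink) : BState :=
  let i := cl_shard cl in
  mkBS (fun j => if j == i then cl_height cl else lastH s j)
       (fun j => if j == i then rcons (shardCLs s j) cl else shardCLs s j)
       [seq c <- pool s | ~~ ((cl_shard c == i) && (cl_height c == cl_height cl))].

Fixpoint drain (n : nat) (i : 'I_m) (s : BState) : BState :=
  match n with
  | 0 => s
  | n'.+1 =>
    match ohead [seq c <- pool s | (cl_shard c == i) && (cl_height c == (lastH s i).+1)] with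
    | Some c => drain n' i (append_cl s c)
    | None => s
    end
  end.

Definition receive (s : BState) (cl : CrossLink) : BState :=
  let i := cl_shard cl in
  if cl_height cl == (lastH s i).+1 then
    let s' := append_cl s cl in drain (size (pool s')) i s'
  else if (lastH s i).+1 < cl_height cl then
    mkBS (lastH s) (shardCLs s) (rcons (pool s) cl)
  else s.

Definition shardLastTS (s : BState) (i : 'I_m) : nat :=
  last 0 (map cl_blockTS (shardCLs s i)).

Definition triggered (s : BState) : bool := [forall i, ~~ nilp (shardCLs s i)].

Definition selectedb (s : BState) (c : CrossLink) : bool :=
  [forall i, cl_blockTS c <= shardLastTS s i].

Definition orderedCLs (s : BState) : seq CrossLink :=
  flatten [seq [seq c <- shardCLs s i | selectedb s c] | i <- enum 'I_m].

Definition after_cycle (s : BState) : BState :=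
  mkBS (lastH s) (fun i => [seq c <- shardCLs s i | ~~ selectedb s c]) (pool s).

Inductive event :=
| Recv of 'I_m & nat   (* beacon chain receives the CrossLink of S_i at height h *)
| Cycle.

Definition step (s : BState) (e : event) : BState :=
  match e with
  | Recv i h => receive s (genCL i h)
  | Cycle => if triggered s then after_cycle s else s
  end.

Definition run (ev : seq event) : BState := foldl step init_state ev.

End Haechi.

(* Every CrossLink kept in shardCLs[j] has block timestamp at most ts_j(lastH[j]),
   and while shardCLs[j] is non-empty its last element is the CrossLink of height
   lastH[j], so shardLastTS[j] = ts_j(lastH[j]).  All heights 1..lastH[j] have been
   received, so an in-flight CrossLink of S_j has height h > lastH[j] and hence a
   timestamp ts_j(h) > ts_j(lastH[j]) >= min_i shardLastTS[i], which bounds every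
   ordered CrossLink.  An ordering cycle preserves the invariant: selection is
   downward closed in the timestamp and the last element carries the largest one,
   so either it survives or shardCLs[j] is emptied. *)
From mathcomp Require Import all_boot.
From Stdlib Require List.

Set Implicit Arguments. Unset Strict Implicit. Unset Printing Implicit Defensive.

Lemma In_all (T : Type) (p : pred T) (s : seq T) (x : T) :
  all p s -> List.In x s -> p x.
Proof. by elim: s => //= y s IHs /andP [py ps] [<- // | ]; apply: IHs. Qed.

Lemma last_filter_upward (T : Type) (k : T -> nat) (p : pred T) (s : seq T) :
    (forall a b, k a <= k b -> p a -> p b) ->
    all (fun a => k a <= last 0 (map k s)) s -> ~~ nilp (filter p s) ->
  last 0 (map k (filter p s)) = last 0 (map k s).
Proof.
move=> p_up; case/lastP: s => [//|s x].
rewrite map_rcons last_rcons all_rcons filter_rcons => /andP [_ le_sx].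
case: ifP => [_ | px]; first by rewrite map_rcons !last_rcons.
rewrite /nilp -lt0n size_filter_gt0 => has_p.
suff : all (predC p) s by rewrite all_predC has_p.
by apply: sub_all le_sx => a le_ax /=; apply/negP => /(p_up _ _ le_ax); rewrite px.
Qed.

Lemma ohead_filter_all (T : Type) (p q : pred T) (s : seq T) (x : T) :
  all q s -> ohead (filter p s) = Some x -> p x && q x.
Proof.
elim: s => //= y s IHs /andP [qy qs].
by case: ifP => [py [<-] | _ /IHs]; [rewrite py | apply].
Qed.

Definition received (m : nat) (ev : seq (event m)) (j : 'I_m) (h : nat) : bool :=
  has (fun e => if e is Recv j' h' then (j' == j) && (h' == h) else false) ev.

Lemma received_In m (ev : seq (event m)) j h : received ev j h -> List.In (Recv j h) ev.
Proof.
elim: ev => //= e ev IHev /orP [| /IHev]; last by right.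
by case: e => // i k /andP [/eqP -> /eqP ->]; left.
Qed.

Lemma orderedCLs_selected m Tx (s : BState m Tx) : all (selectedb s) (orderedCLs s).
Proof.
by rewrite /orderedCLs; elim: (enum 'I_m) => //= i r IHr; rewrite all_cat filter_all.
Qed.

Section Invariant.

Variables (m : nat) (Tx : Type) (ts : 'I_m -> nat -> nat) (txs : 'I_m -> nat -> seq Tx).
Hypothesis ts_incr : forall (i : 'I_m) (h h' : nat), 0 < h -> h < h' -> ts i h < ts i h'.

Implicit Types (s : BState m Tx) (c : CrossLink m Tx).

Definition authentic c : bool := cl_blockTS c == ts (cl_shard c) (cl_height c).

Section Receipts.

(* [rcv] is any superset of the received (shard, height) pairs. *)
Variable rcv : 'I_m -> nat -> bool.

Record wf_state s : Prop := WfState {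
  wf_ts_bound : forall j, all (fun c => cl_blockTS c <= ts j (lastH s j)) (shardCLs s j);
  wf_last : forall j, ~~ nilp (shardCLs s j) ->
    0 < lastH s j /\ shardLastTS s j = ts j (lastH s j);
  wf_pool : all (fun c => authentic c && rcv (cl_shard c) (cl_height c)) (pool s);
  wf_received : forall j h, 0 < h <= lastH s j -> rcv j h }.

Lemma wf_init : wf_state (init_state m Tx).
Proof. by split=> // j h /andP [/leq_trans h_pos /h_pos]. Qed.

Lemma wf_append s c :
    wf_state s -> authentic c -> rcv (cl_shard c) (cl_height c) ->
    cl_height c = (lastH s (cl_shard c)).+1 ->
  wf_state (append_cl s c).
Proof.
case: c => t x i h [bound last_ts pool_ok rcvd] /eqP /= -> /= rcv_h h_next.
rewrite /append_cl /=; split=> /= [j | j | | j k].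
- case: eqP => [-> | _]; last exact: bound.
  rewrite all_rcons /= h_next leqnn /=.
  have [/nilP -> // | /last_ts [lastH_pos _]] := boolP (nilp (shardCLs s i)).
  by apply: sub_all (bound i) => c /leq_trans; apply; apply/ltnW/ts_incr.
- rewrite /shardLastTS /=; case: eqP => [-> _ | _]; last exact: last_ts.
  by rewrite h_next map_rcons last_rcons.
- by rewrite all_filter; apply: sub_all pool_ok => c pc; rewrite /= pc implybT.
- case: eqP => [-> | _] /andP [k_pos]; last by move=> le_k; apply: rcvd; rewrite k_pos.
  rewrite h_next leq_eqVlt ltnS => /orP [/eqP -> | le_k]; first by rewrite -h_next.
  by apply: rcvd; rewrite k_pos.
Qed.

Lemma wf_drain n i s : wf_state s -> wf_state (drain n i s).
Proof.
elim: n s => [|n IHn] s wf_s //=.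
case next: ohead => [c|] //; apply/IHn.
have /andP [/andP [/eqP shard_c height_c] /andP [auth_c rcv_c]] :=
  ohead_filter_all (wf_pool wf_s) next.
by apply: wf_append => //; rewrite shard_c; apply/eqP.
Qed.

Lemma wf_receive s i h :
  wf_state s -> rcv i h -> wf_state (receive s (genCL ts txs i h)).
Proof.
move=> wf_s rcv_h; rewrite /receive /=.
case: eqP => [h_next | _].
  by apply/wf_drain/wf_append; rewrite //= /authentic eqxx.
case: ifP => // _; case: wf_s => bound last_ts pool_ok rcvd; split=> //=.
by rewrite all_rcons /authentic /= eqxx rcv_h.
Qed.

Lemma wf_after_cycle s : wf_state s -> wf_state (after_cycle s).
Proof.
case=> bound last_ts pool_ok rcvd; split=> //= j.
  by rewrite all_filter; apply: sub_all (bound j) => c le_c; rewrite /= le_c implybT.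
move=> ne; have ne_j : ~~ nilp (shardCLs s j) by apply: contraNN ne => /nilP ->.
have [lastH_pos last_j] := last_ts j ne_j; split=> //.
rewrite /shardLastTS /= last_filter_upward -/(shardLastTS s j) //.
- move=> a b le_ab; apply: contraNN => /forallP sel_b.
  by apply/forallP => k; apply: leq_trans le_ab (sel_b k).
- by rewrite last_j; apply: bound.
Qed.

Lemma selected_lt_unreceived s c j h :
    wf_state s -> triggered s -> selectedb s c -> 0 < h -> ~~ rcv j h ->
  cl_blockTS c < ts j h.
Proof.
move=> wf_s /forallP /(_ j) ne_j /forallP /(_ j) le_c h_pos not_rcv.
have [lastH_pos last_j] := wf_last wf_s ne_j.
have lt_h : lastH s j < h.
  rewrite ltnNge; move: not_rcv; apply: contraNN => le_h.
  by apply: (wf_received wf_s); rewrite h_pos.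
by apply: leq_ltn_trans le_c _; rewrite last_j; apply: ts_incr.
Qed.

End Receipts.

Lemma wf_monotone (rcv rcv' : 'I_m -> nat -> bool) s :
  (forall j h, rcv j h -> rcv' j h) -> wf_state rcv s -> wf_state rcv' s.
Proof.
move=> rcv_sub [bound last_ts pool_ok rcvd]; split=> // [|j h /rcvd/rcv_sub //].
by apply: sub_all pool_ok => c /andP [-> /rcv_sub].
Qed.

Lemma wf_run ev : wf_state (received ev) (run ts txs ev).
Proof.
elim/last_ind: ev => [|ev e IHev]; first exact: wf_init.
have received_rcons j h : received ev j h -> received (rcons ev e) j h.
  by rewrite /received has_rcons orbC => ->.
rewrite /run foldl_rcons -/(run ts txs ev).
have := wf_monotone received_rcons IHev.
case: e {IHev received_rcons} => [i h | ] wf_s /=.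
  by apply: wf_receive => //; rewrite /received has_rcons /= !eqxx.
by case: ifP => // _; apply: wf_after_cycle.
Qed.

End Invariant.

Theorem lemma1 (m : nat) (Tx : Type)
  (ts : 'I_m -> nat -> nat) (txs : 'I_m -> nat -> seq Tx)
  (ts_incr : forall (i : 'I_m) (h h' : nat), 0 < h -> h < h' -> ts i h < ts i h')
  (ev : seq (event m)) :
  let s := run ts txs ev in
  triggered s ->
  forall c : CrossLink m Tx, List.In c (orderedCLs s) ->
  forall (j : 'I_m) (h : nat), 0 < h -> ~ List.In (Recv j h) ev ->
  cl_blockTS c < cl_blockTS (genCL ts txs j h).
Proof.
move=> s triggered_s c ordered_c j h h_pos not_received.
apply: (selected_lt_unreceived ts_incr (wf_run txs ts_incr ev)) => //=.
- exact: In_all (orderedCLs_selected s) ordered_c.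
- by apply/negP => /received_In.
Qed.
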